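(* Let $T\in B(\mathcal{F})$ be a block-diagonal operator and let $(A_n)_{n\ge0}$ be its sequence of $\mathcal{C}$-approximants (defined in the context). Then for every $n\ge0$ and every $m\ge0$, \[A_n|_{\mathcal{F}_m}=\begin{cases}T|_{\mathcal{F}_m}&\text{if }m\le n,\\ (T|_{\mathcal{F}_n})\otimes I_{m-n}&\text{if }m>n,\end{cases}\] where $(T|_{\mathcal{F}_n})\otimes I_{m-n}$ acts on $\mathcal{F}_m=\mathcal{F}_n\otimes\mathcal{F}_{m-n}$ and $I_{m-n}$ is the identity of $\mathcal{F}_{m-n}$.
   Context: $d\ge2$; $\xi_1,\ldots,\xi_d$ is the standard orthonormal basis of $\mathbb{C}^d$. $\mathcal{F}=\bigoplus_{n\ge0}\mathcal{F}_n$ is the full Fock space, $\mathcal{F}_0=\mathbb{C}\Omega$, $\mathcal{F}_n=(\mathbb{C}^d)^{\otimes n}$ with the usual inner product. $L_j\eta=\xi_j\otimes\eta$ (and $L_j\Omega=\xi_j$) are the left creation operators, $\mathcal{C}=C^*(L_1,\ldots,L_d)$. $T$ is block-diagonal if $T(\mathcal{F}_n)\subseteq\mathcal{F}_n$ for all $n$. The $\mathcal{C}$-approximants of $T$ are defined recursively by $A_0=\langle T\Omega,\Omega\rangle I_{\mathcal{F}}$ and, for $n\ge0$, $A_{n+1}=A_n+\sum c_{i_1,\ldots,i_{n+1};j_1,\ldots,j_{n+1}}(L_{i_1}\cdots L_{i_{n+1}})(L_{j_1}\cdots L_{j_{n+1}})^*$, the sum over all $1\le i_1,\ldots,i_{n+1},j_1,\ldots,j_{n+1}\le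 d$, with $c_{i_1,\ldots,i_{n+1};j_1,\ldots,j_{n+1}}=\langle T(\xi_{j_1}\otimes\cdots\otimes\xi_{j_{n+1}}),\xi_{i_1}\otimes\cdots\otimes\xi_{i_{n+1}}\rangle-\delta_{i_{n+1},j_{n+1}}\langle T(\xi_{j_1}\otimes\cdots\otimes\xi_{j_n}),\xi_{i_1}\otimes\cdots\otimes\xi_{i_n}\rangle$ (for $n=0$ the second inner product is $\langle T\Omega,\Omega\rangle$). *)

From mathcomp Require Import all_boot all_algebra.
From mathcomp Require Import reals.
From mathcomp Require Export complex.
Set Implicit Arguments. Unset Strict Implicit. Unset Printing Implicit Defensive.
Import GRing.Theory Num.Theory.
Local Open Scope ring_scope.

(* Vectors of the (algebraic) full Fock space over C^d are coefficient functions
   on words: x w is the coordinate of x along xi_{w_1} (x) ... (x) xi_{w_k}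
   (the empty word corresponds to the vacuum Omega). *)
Definition word (d : nat) := seq 'I_d.
Definition vect (d : nat) (C : Type) := word d -> C.

Section Fock.
Variables (d : nat) (C : numClosedFieldType).

Definition xi (u : word d) : vect d C := fun w => (w == u)%:R.

Definition inF (m : nat) (x : vect d C) : Prop :=
  forall w : word d, size w != m -> x w = 0.

Definition finsupp (x : vect d C) : Prop :=
  exists s : seq (word d), forall w, w \notin s -> x w = 0.

Definition addv (x y : vect d C) : vect d C := fun w => x w + y w.
Definition scalev (a : C) (x : vect d C) : vect d C := fun w => a * x w.

(* left creation operator L_j : eta |-> xi_j (x) eta *)
Definition Lop (j : 'I_d) (x : vect d C) : vect d C :=
  fun w => match w with
           | [::] => 0
           | i :: w' => if i == j then x w' else 0
           end.

(* its adjoint L_j^* : (L_j^* x)(w) = <x, L_j xi_w> = x (j :: w) *)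
Definition Lstar (j : 'I_d) (x : vect d C) : vect d C := fun w => x (j :: w).

Definition Lword (I : word d) : vect d C -> vect d C :=
  foldr (fun i f => Lop i \o f) id I.

Definition Lword_adj (J : word d) : vect d C -> vect d C :=
  foldr (fun j f => f \o Lstar j) id J.

Variable T : vect d C -> vect d C.

Definition coef (n : nat) (I J : (n.+1).-tuple 'I_d) : C :=
  T (xi J) I
  - (tnth I ord_max == tnth J ord_max)%:R * T (xi (take n J)) (take n I).

Fixpoint approx (n : nat) : vect d C -> vect d C :=
  match n with
  | 0 => fun x => scalev (T (xi [::]) [::]) x
  | n'.+1 => fun x => addv (approx n' x)
      (fun w => \sum_(I : n'.+1.-tuple 'I_d) \sum_(J : n'.+1.-tuple 'I_d)
                   coef I J * Lword I (Lword_adj J x) w)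
  end.

(* (S|_{F_n}) (x) I_{m-n} acting on F_m = F_n (x) F_{m-n}, where
   xi_u (x) xi_v is identified with xi_{u ++ v}:
   xi_{u++v} |-> (S xi_u) (x) xi_v, and (f (x) g)(w) = f (take n w) * g (drop n w). *)
Definition tensI (n m : nat) (S : vect d C -> vect d C) (x : vect d C) : vect d C :=
  fun w => \sum_(u : n.-tuple 'I_d) \sum_(v : (m - n).-tuple 'I_d)
             x (u ++ v) * (S (xi u) (take n w) * xi v (drop n w)).

End Fock.

Definition fock_linear (d : nat) (C : numClosedFieldType) (T : vect d C -> vect d C) :=
  forall (a : C) (x y : vect d C), finsupp x -> finsupp y ->
    T (addv (scalev a x) y) = addv (scalev a (T x)) (T y).

Definition block_diagonal (d : nat) (C : numClosedFieldType) (T : vect d C -> vect d C) :=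
  forall (n : nat) (x : vect d C), inF n x -> inF n (T x).

Definition blocks_bounded (d : nat) (C : numClosedFieldType) (T : vect d C -> vect d C) :=
  exists M : C, 0 <= M /\
    forall (n : nat) (x : vect d C), inF n x ->
      \sum_(w : n.-tuple 'I_d) `|T x w| ^+ 2 <= M * \sum_(w : n.-tuple 'I_d) `|x w| ^+ 2.

(* On a word w of length m, the approximant A_n sees only the prefix of w of length n: the term
   added at level n + 1 telescopes, since the second part of its coefficient reproduces the
   level-n term after summing over the last letter.  Hence A_n acts as (T|F_n) (x) I on words of
   length at least n and stops changing once n reaches the length of w, where it equals T. *)
From Pilot Require Import Defs.
From mathcomp Require Import all_boot all_algebra.
From mathcomp Require Import reals complex zify.
From Stdlib Require Import FunctionalExtensionality.
Import GRing.Theory Num.Theory.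
Local Open Scope ring_scope.
Set Implicit Arguments. Unset Strict Implicit.

Section Words.
Variables (d : nat) (C : numClosedFieldType).

Lemma Lword_adjE (J : word d) (y : vect d C) (w : word d) : Lword_adj J y w = y (J ++ w).
Proof. by elim: J y => [|j J IH] y //=; rewrite IH. Qed.

Lemma LwordE (I : word d) (y : vect d C) (w : word d) :
  Lword I y w = (take (size I) w == I)%:R * y (drop (size I) w).
Proof.
elim: I w => [|i I IH] [|a w] /=; rewrite ?take0 ?drop0 ?mul1r ?mul0r //.
by rewrite IH eqseq_cons; case: (a == i); rewrite ?mul0r.
Qed.

Lemma sum_delta (I : finType) (a : I) (F : I -> C) : \sum_i (a == i)%:R * F i = F a.
Proof.
rewrite (bigD1 a) //= eqxx mul1r big1 ?addr0 // => i.
by rewrite eq_sym => /negbTE ->; rewrite mul0r.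
Qed.

Lemma sum_tuple_xi n (F : word d -> C) (s : word d) :
  \sum_(J : n.-tuple 'I_d) F J * xi C J s = (size s == n)%:R * F s.
Proof.
case: (boolP (size s == n)) => hs.
  rewrite mul1r -(sum_delta (Tuple hs) (fun J => F J)); apply: eq_bigr => J _.
  by rewrite /xi mulrC -val_eqE.
rewrite mul0r big1 // => J _; rewrite /xi.
by case: eqP => [e|_]; [rewrite e size_tuple eqxx in hs | rewrite mulr0].
Qed.

Lemma take_tupleP n (w : word d) (t : n.-tuple 'I_d) : take n w = t -> (n <= size w)%N.
Proof. by move/(congr1 size); rewrite size_tuple size_take_min => <-; rewrite geq_minr. Qed.

Lemma tnth_rcons_max n (t : n.-tuple 'I_d) (j : 'I_d) : tnth (rcons_tuple t j) ord_max = j.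
Proof. by rewrite (tnth_nth j) /= nth_rcons size_tuple ltnn eqxx. Qed.

Lemma sum_rcons_tuple n (F : n.+1.-tuple 'I_d -> C) :
  \sum_(J : n.+1.-tuple 'I_d) F J = \sum_(J : n.-tuple 'I_d) \sum_(j : 'I_d) F (rcons_tuple J j).
Proof.
have size_take_tuple (J : n.+1.-tuple 'I_d) : size (take n J) == n.
  by rewrite size_take size_tuple ltnSn.
rewrite pair_big /= (reindex (fun p : n.-tuple 'I_d * 'I_d => rcons_tuple p.1 p.2)) //=.
exists (fun J => (Tuple (size_take_tuple J), tnth J ord_max)) => [[t j] _ | J _] /=.
  by rewrite tnth_rcons_max; congr pair; apply: val_inj; rewrite /= -cats1 take_size_cat ?size_tuple.
apply: val_inj; rewrite /= (tnth_nth (tnth J ord_max)) /= -take_nth ?size_tuple //.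
by rewrite take_oversize // size_tuple.
Qed.

Lemma inF_expand m (x : vect d C) :
  inF m x -> x = fun w => \sum_(J : m.-tuple 'I_d) x J * xi C J w.
Proof.
move=> hx; apply: functional_extensionality => w; rewrite sum_tuple_xi.
by case: eqP => [_|/eqP hw]; rewrite ?mul1r // mul0r hx.
Qed.

End Words.

Section Linearity.
Variables (d : nat) (C : numClosedFieldType) (T : vect d C -> vect d C).
Hypothesis T_linear : fock_linear T.

Lemma finsupp_lincomb (I : Type) (r : seq I) (f : I -> C) (g : I -> word d) :
  finsupp (fun w => \sum_(i <- r) f i * xi C (g i) w).
Proof.
elim: r => [|i r [s hs]]; first by exists [::] => w _; rewrite big_nil.
exists (g i :: s) => w; rewrite inE negb_or => /andP[hwi hws].
by rewrite big_cons /xi (negbTE hwi) mulr0 add0r hs.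
Qed.

Lemma fock_linear_zero : T (fun _ => 0) = fun _ => 0.
Proof.
have fin0 : finsupp (fun _ : word d => 0 : C) by exists [::].
have := T_linear 1 fin0 fin0.
have -> : Defs.addv (scalev 1 (fun _ => 0)) (fun _ => 0) = fun _ : word d => 0 : C.
  by apply: functional_extensionality => w; rewrite /Defs.addv /scalev mulr0 addr0.
move=> e; apply: functional_extensionality => w.
move: (congr1 (fun f => f w) e); rewrite /Defs.addv /scalev mul1r.
by rewrite -{1}[T _ w]addr0 => /addrI.
Qed.

Lemma fock_linear_sum (I : Type) (r : seq I) (f : I -> C) (g : I -> word d) :
  T (fun w => \sum_(i <- r) f i * xi C (g i) w) = fun w => \sum_(i <- r) f i * T (xi C (g i)) w.
Proof.
elim: r => [|i r IH].
  rewrite (_ : (fun w => _) = fun _ => 0) ?fock_linear_zero;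
    by apply: functional_extensionality => w; rewrite big_nil.
have fin_xi : finsupp (xi C (g i)) by exists [:: g i] => w; rewrite inE /xi => /negbTE ->.
have := T_linear (f i) fin_xi (finsupp_lincomb r f g).
rewrite (_ : Defs.addv _ _ = fun w => \sum_(j <- i :: r) f j * xi C (g j) w); last first.
  by apply: functional_extensionality => w; rewrite big_cons.
move=> ->; rewrite IH; apply: functional_extensionality => w.
by rewrite /Defs.addv /scalev big_cons.
Qed.

Lemma fock_linear_inF m (x : vect d C) :
  inF m x -> T x = fun w => \sum_(J : m.-tuple 'I_d) x J * T (xi C J) w.
Proof. by move=> /inF_expand {1}->; exact: (fock_linear_sum (index_enum _) _ val). Qed.

End Linearity.

Section Approximants.
Variables (d : nat) (C : numClosedFieldType) (T : vect d C -> vect d C).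

(* Pointwise form of (T|F_n) (x) I, valid on words of length at least n. *)
Definition tens_id (n : nat) (x : vect d C) : vect d C :=
  fun w => \sum_(u : n.-tuple 'I_d) x (u ++ drop n w) * T (xi C u) (take n w).

Lemma approx_succE n (x : vect d C) (w : word d) :
  approx T n.+1 x w = approx T n x w +
    \sum_(I : n.+1.-tuple 'I_d) (take n.+1 w == I)%:R *
      \sum_(J : n.+1.-tuple 'I_d) coef T I J * x (J ++ drop n.+1 w).
Proof.
rewrite /= /Defs.addv; congr (_ + _); apply: eq_bigr => I _.
rewrite mulr_sumr; apply: eq_bigr => J _.
by rewrite LwordE Lword_adjE !size_tuple mulrCA.
Qed.

Lemma approx_stable n (x : vect d C) (w : word d) :
  (size w <= n)%N -> approx T n x w = approx T (size w) x w.
Proof.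
elim: n => [|n IH]; first by rewrite leqn0 => /eqP ->.
rewrite leq_eqVlt => /orP[/eqP -> // | hw].
rewrite approx_succE -IH // big1 ?addr0 // => I _.
case: eqP => [e|_]; last by rewrite mul0r.
by move: hw; rewrite ltnNge (take_tupleP e).
Qed.

Lemma approx_inF m n (x : vect d C) : inF m x -> inF m (approx T n x).
Proof.
move=> hx; elim: n => [|n IH] w hw; first by rewrite /= /scalev hx ?mulr0.
rewrite approx_succE IH // add0r big1 // => I _.
case: eqP => [e|_]; last by rewrite mul0r.
rewrite big1 ?mulr0 // => J _; rewrite hx ?mulr0 //.
by move: (take_tupleP e) hw; rewrite size_cat size_drop size_tuple; lia.
Qed.

Lemma tens_id_succ n (x : vect d C) (w : word d) (I : n.+1.-tuple 'I_d) :
  val I = take n.+1 w ->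
  tens_id n.+1 x w = tens_id n x w + \sum_(J : n.+1.-tuple 'I_d) coef T I J * x (J ++ drop n.+1 w).
Proof.
move=> hI.
have hn : (n < size w)%N := take_tupleP (esym hI).
set a := tnth I ord_max.
have ha : a = nth a w n by rewrite {1}/a (tnth_nth a) hI nth_take.
rewrite /coef; under eq_bigr do rewrite mulrBl; rewrite sumrB.
have -> : \sum_(J : n.+1.-tuple 'I_d) T (xi C J) I * x (J ++ drop n.+1 w) = tens_id n.+1 x w.
  by apply: eq_bigr => J _; rewrite hI mulrC.
(* summing the correction over the last letter of J leaves only the letter a *)
have -> : \sum_(J : n.+1.-tuple 'I_d)
    (a == tnth J ord_max)%:R * T (xi C (take n J)) (take n I) * x (J ++ drop n.+1 w)
    = tens_id n x w.
  rewrite sum_rcons_tuple; apply: eq_bigr => J _.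
  under eq_bigr do rewrite tnth_rcons_max -mulrA.
  rewrite sum_delta /= -cats1 take_size_cat ?size_tuple // hI take_takel //.
  by rewrite -catA (drop_nth a hn) -ha mulrC.
by rewrite addrC subrK.
Qed.

Lemma approx_tens_id n (x : vect d C) (w : word d) :
  (n <= size w)%N -> approx T n x w = tens_id n x w.
Proof.
elim: n => [|n IH] hn.
  rewrite /= /scalev /tens_id (big_pred1 [tuple]) => [|J]; last by rewrite [J]tuple0 /= eqxx.
  by rewrite /= drop0 take0 mulrC.
have size_take_w : size (take n.+1 w) == n.+1 by rewrite size_takel.
rewrite approx_succE (IH (ltnW hn)) (tens_id_succ x (I := Tuple size_take_w)) //.
by congr (_ + _); exact: (sum_delta (Tuple size_take_w)).
Qed.

Lemma T_tens_id m (x : vect d C) (w : word d) :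
  fock_linear T -> inF m x -> size w = m -> T x w = tens_id m x w.
Proof.
move=> T_linear hx hw; rewrite (fock_linear_inF T_linear hx) /tens_id.
rewrite take_oversize ?drop_oversize ?hw //.
by apply: eq_bigr => J _; rewrite cats0 mulrC.
Qed.

Lemma tensIE n m (x : vect d C) (w : word d) :
  (n < m)%N -> tensI n m T x w = (size w == m)%:R * tens_id n x w.
Proof.
move=> hnm; rewrite /tensI /tens_id mulr_sumr; apply: eq_bigr => u _.
under eq_bigr do rewrite mulrA.
rewrite (sum_tuple_xi _ (fun v => x (u ++ v) * T (xi C u) (take n w))) size_drop.
by congr (_%:R * _); apply/eqP/eqP; lia.
Qed.

End Approximants.

Theorem lemma3p2 (R : realType) (d : nat) (T : vect d R[i] -> vect d R[i]) :
  (2 <= d)%N ->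
  fock_linear T -> block_diagonal T -> blocks_bounded T ->
  forall (n m : nat) (x : vect d R[i]), inF m x ->
    ((m <= n)%N -> approx T n x = T x) /\
    ((n < m)%N -> approx T n x = tensI n m T x).
Proof.
move=> _ T_linear T_block _ n m x hx; split => hnm; apply: functional_extensionality => w;
  case: (eqVneq (size w) m) => hw.
- rewrite approx_stable ?hw // approx_tens_id ?hw //.
  by rewrite (T_tens_id T_linear hx hw).
- by rewrite (approx_inF T n hx hw) (T_block _ _ hx w hw).
- by rewrite tensIE // hw eqxx mul1r approx_tens_id ?hw // ltnW.
- by rewrite tensIE // (negbTE hw) mul0r (approx_inF T n hx hw).
Qed.
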